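(* Let $G$ be a graph and $e=ab$ an edge of $G$. If $G$ has a minor model of $K_5$ or $K_{2,2,2}$ in which $a$ and $b$ lie in different branch sets, then $G$ has an induced minor model of $K_5$ or $K_{2,2,2}$ in which $a$ and $b$ lie in different branch sets.
   Context: A minor model of $M$ in $G$ is a partition of $V(G)$ into nonempty branch sets $B_x$ ($x\in V(M)$), each inducing a connected subgraph, such that for every $xy\in E(M)$ some edge of $G$ joins $B_x$ and $B_y$. It is an induced minor model if moreover $xy\in E(M)$ if and only if some edge of $G$ joins $B_x$ and $B_y$ (i.e. $M$ is obtained by contractions only). *)

From mathcomp Require Import all_boot.
Set Implicit Arguments. Unset Strict Implicit. Unset Printing Implicit Defensive.

Definition simple_graph (V : finType) (e : rel V) : Prop :=
  symmetric e /\ irreflexive e.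

(* A minor model of (M, eM) in (V, e): a map f : V -> M assigning every
   vertex of G to its branch set B_x = f^-1(x). *)
Definition branch_rel (V M : finType) (e : rel V) (f : V -> M) (x : M) : rel V :=
  [rel u v | [&& e u v, f u == x & f v == x]].

Definition minor_model (V M : finType) (e : rel V) (eM : rel M) (f : V -> M) : Prop :=
  [/\ (forall x : M, exists v : V, f v = x),
      (forall (x : M) (u v : V), f u = x -> f v = x -> connect (branch_rel e f x) u v)
    & (forall x y : M, eM x y -> exists u v : V, [/\ f u = x, f v = y & e u v])].

Definition induced_minor_model (V M : finType) (e : rel V) (eM : rel M) (f : V -> M) : Prop :=
  minor_model e eM f /\
  (forall x y : M, x != y -> (exists u v : V, [/\ f u = x, f v = y & e u v]) -> eM x y).

Definition K5 : rel 'I_5 := fun i j => i != j.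

Definition K222 : rel 'I_6 := fun i j => (i./2 != j./2)%N.

(* A model of K5 is always induced, K5 being complete.  If a model of
   K_{2,2,2} is not induced, some edge of G joins the branch sets of two
   opposite vertices r and s.  The octahedron plus the edge rs contracts to
   K5 by merging p and q, for p and q taken one from each of the two classes
   other than {r, s}; of these four choices at least one keeps the branch
   sets of a and b apart, and the merged branch set stays connected because
   p and q are adjacent in the model. *)

From mathcomp Require Import all_boot zmodp.

Set Implicit Arguments.
Unset Strict Implicit.
Unset Printing Implicit Defensive.

Definition add_edge (M : eqType) (eM : rel M) (r s : M) : rel M :=
  fun x y => [|| eM x y, (x == r) && (y == s) | (x == s) && (y == r)].

Definition contraction (M M' : Type) (eM : rel M) (eM' : rel M')
    (h : M -> M') : Prop :=
  [/\ forall x', exists x, h x = x',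
      forall x y, h x = h y -> x = y \/ eM x y
    & forall x' y', eM' x' y' -> exists x y, [/\ h x = x', h y = y' & eM x y]].

Section MinorModels.
Variables (V M M' : finType) (e : rel V).

Lemma connect_branch_comp (f : V -> M) (h : M -> M') (x : M) (u v : V) :
  connect (branch_rel e f x) u v -> connect (branch_rel e (h \o f) (h x)) u v.
Proof.
apply: connect_sub => w z /and3P [ewz /eqP fw /eqP fz]; apply: connect1.
by rewrite /branch_rel /= ewz fw fz eqxx.
Qed.

Lemma minor_model_contraction (eM : rel M) (eM' : rel M')
    (f : V -> M) (h : M -> M') :
  minor_model e eM f -> contraction eM eM' h -> minor_model e eM' (h \o f).
Proof.
move=> [f_onto f_conn f_edge] [h_onto h_fibre h_edge]; split.
- move=> x'; have [x <-] := h_onto x'; have [v <-] := f_onto x; by exists v.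
- move=> _ u v <- /esym /= huv.
  have [fuv | /f_edge [u0 [v0 [fu0 fv0 e0]]]] := h_fibre _ _ huv.
    by apply: connect_branch_comp; apply: f_conn.
  apply: (connect_trans (connect_branch_comp h (f_conn _ u u0 erefl fu0))).
  apply: (connect_trans (y := v0)).
    by apply: connect1; rewrite /branch_rel /= e0 fu0 fv0 -huv !eqxx.
  by rewrite huv; apply: connect_branch_comp; apply: f_conn.
- move=> x' y' /h_edge [x [y [<- <- /f_edge [u [v [fu fv euv]]]]]].
  by exists u, v; rewrite /= fu fv.
Qed.

Lemma minor_model_add_edge (eM : rel M) (f : V -> M) (u v : V) :
  symmetric e -> minor_model e eM f -> e u v ->
  minor_model e (add_edge eM (f u) (f v)) f.
Proof.
move=> esym [f_onto f_conn f_edge] euv; split=> // x y.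
case/or3P=> [/f_edge // | /andP [/eqP-> /eqP->] | /andP [/eqP-> /eqP->]].
  by exists u, v.
by exists v, u; rewrite esym.
Qed.

Lemma minor_model_induced (eM : rel M) (f : V -> M) :
  minor_model e eM f -> (forall u v, e u v -> f u != f v -> eM (f u) (f v)) ->
  induced_minor_model e eM f.
Proof.
move=> mf induced; split=> // x y xy [u [v [fu fv euv]]].
by subst x y; apply: induced.
Qed.

Lemma complete_minor_model_induced (eM : rel M) (f : V -> M) :
  (forall x y, x != y -> eM x y) -> minor_model e eM f -> induced_minor_model e eM f.
Proof. by move=> complete mf; split=> // x y /complete. Qed.

End MinorModels.

(* Unlike [enum 'I_n.+1] and [ord_enum n.+1], whose membership tests go
   through [insub] and hence the opaque [idP], this enumeration evaluates
   under [vm_compute]. *)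
Definition inZp_enum (n : nat) : seq 'I_n.+1 := map inZp (iota 0 n.+1).

Lemma mem_inZp_enum (n : nat) (x : 'I_n.+1) : x \in inZp_enum n.
Proof. by apply/mapP; exists (val x); rewrite ?valZpK // mem_iota ltn_ord. Qed.

Definition contractionb (m n : nat) (eM : rel 'I_m.+1) (eM' : rel 'I_n.+1)
    (h : 'I_m.+1 -> 'I_n.+1) : bool :=
  [&& all (fun x' => has (fun x => h x == x') (inZp_enum m)) (inZp_enum n),
      all (fun x => all (fun y => (h x == h y) ==> (x == y) || eM x y)
        (inZp_enum m)) (inZp_enum m)
    & all (fun x' => all (fun y' => eM' x' y' ==>
        has (fun x => has (fun y => [&& h x == x', h y == y' & eM x y])
          (inZp_enum m)) (inZp_enum m)) (inZp_enum n)) (inZp_enum n)].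

Lemma contractionb_sound (m n : nat) (eM : rel 'I_m.+1) (eM' : rel 'I_n.+1)
    (h : 'I_m.+1 -> 'I_n.+1) :
  contractionb eM eM' h -> contraction eM eM' h.
Proof.
case/and3P=> /allP onto /allP fibre /allP edge; split.
- move=> x'; have /hasP [x _ /eqP hx] := onto x' (mem_inZp_enum x').
  by exists x.
- move=> x y hxy; move: (allP (fibre x (mem_inZp_enum x)) y (mem_inZp_enum y)).
  by rewrite hxy eqxx /= => /orP [/eqP|]; [left | right].
- move=> x' y' exy; move: (allP (edge x' (mem_inZp_enum x')) y' (mem_inZp_enum y')).
  by rewrite exy => /hasP [x _ /hasP [y _ /and3P [/eqP hx /eqP hy]]]; exists x, y.
Qed.

(* Identifies [q] with [p]; meaningless for [p = q]. *)
Definition merge_vertices (n : nat) (p q x : 'I_n.+2) : 'I_n.+1 :=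
  inZp (unbump q (if x == q then p else x)).

Lemma K222_add_edge_contraction (r s p q : 'I_6) :
  r != s -> ~~ K222 r s -> K222 p q -> K222 r p -> K222 r q ->
  contraction (add_edge K222 r s) K5 (merge_vertices p q).
Proof.
(* An [if] rather than [==>]: [vm_compute] evaluates both arguments of a
   boolean connective, and [contractionb] is the expensive one. *)
have check : all (fun r => all (fun s => all (fun p => all (fun q =>
    if [&& r != s, ~~ K222 r s, K222 p q, K222 r p & K222 r q]
    then contractionb (add_edge K222 r s) K5 (merge_vertices p q) else true)
    (inZp_enum 5)) (inZp_enum 5)) (inZp_enum 5)) (inZp_enum 5).
  by vm_compute.
move=> rs nK pq rp rq; apply: contractionb_sound; move: check.
move=> /allP/(_ r (mem_inZp_enum r))/allP/(_ s (mem_inZp_enum s)).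
move=> /allP/(_ p (mem_inZp_enum p))/allP/(_ q (mem_inZp_enum q)).
by rewrite rs nK pq rp rq.
Qed.

Lemma K222_merge_separating (r i j : 'I_6) : i != j ->
  exists p q, [/\ K222 p q, K222 r p, K222 r q &
                  merge_vertices p q i != merge_vertices p q j].
Proof.
have check : all (fun r => all (fun i => all (fun j => (i != j) ==>
    has (fun p => has (fun q => [&& K222 p q, K222 r p, K222 r q &
      merge_vertices p q i != merge_vertices p q j]) (inZp_enum 5)) (inZp_enum 5))
    (inZp_enum 5)) (inZp_enum 5)) (inZp_enum 5).
  by vm_compute.
move=> ij; move: check => /allP/(_ r (mem_inZp_enum r))/allP/(_ i (mem_inZp_enum i)).
move=> /allP/(_ j (mem_inZp_enum j)); rewrite ij => /hasP [p _ /hasP [q _]].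
by case/and4P=> pq rp rq hij; exists p, q.
Qed.

Theorem mainTheorem16 (V : finType) (e : rel V) (a b : V) :
  simple_graph e -> e a b ->
  ((exists f : V -> 'I_5, minor_model e K5 f /\ f a != f b) \/
   (exists f : V -> 'I_6, minor_model e K222 f /\ f a != f b)) ->
  ((exists f : V -> 'I_5, induced_minor_model e K5 f /\ f a != f b) \/
   (exists f : V -> 'I_6, induced_minor_model e K222 f /\ f a != f b)).
Proof.
move=> [esym _] _ [[f [mf fab]] | [f [mf fab]]].
  by left; exists f; split=> //; apply: complete_minor_model_induced.
have [extra | no_extra] :=
  boolP [exists u, exists v, [&& e u v, f u != f v & ~~ K222 (f u) (f v)]].
  have [u /existsP [v /and3P [euv fuv nK]]] := existsP extra.
  have [p [q [pq rp rq hab]]] := K222_merge_separating (f u) fab.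
  left; exists (merge_vertices p q \o f); split=> //.
  apply: complete_minor_model_induced => //.
  apply: minor_model_contraction (minor_model_add_edge esym mf euv) _.
  exact: K222_add_edge_contraction.
right; exists f; split=> //; apply: minor_model_induced => // u v euv fuv.
apply: contraT => nK; case/negP: no_extra.
by apply/existsP; exists u; apply/existsP; exists v; rewrite euv fuv nK.
Qed.
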